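(* An effect algebra $A$ satisfies the Riesz decomposition property if and only if the category of elements $\int R(A)$ is amalgamated.
   Context: An effect algebra is a partial algebra $(A;+,0,1)$, with a binary partial operation $+$ and constants $0,1$, satisfying: (E1) if $a+b$ is defined, then $b+a$ is defined and $a+b=b+a$; (E2) if $a+b$ and $(a+b)+c$ are defined, then $b+c$ and $a+(b+c)$ are defined and $(a+b)+c=a+(b+c)$; (E3) for every $a$ there is a unique $a^\perp$ such that $a+a^\perp=1$; (E4) if $a+1$ is defined, then $a=0$. One-element effect algebras are allowed. The order is given by $a\le b$ iff $a+c=b$ for some $c$. Morphisms of effect algebras preserve $1$ and defined sums; $\mathbf{EA}$ is the category of effect algebras. $A$ has the Riesz decomposition property if for all $u,v_1,v_2\in A$ with $u\le v_1+v_2$ there exist $u_1\le v_1$ and $u_2\le v_2$ with $u=u_1+u_2$. Boolean algebras are effect algebras via: $x+y$ is defined iff $x\wedge y=0$, and then $x+y=x\vee y$. For $[n]=\{1,\dots,n\}$, $\mathbf{FinBool}$ is the full subcategory of Boolean algebras on the objects $2^{[n]}$, $n\in\mathbb N$. The category $\int R(A)$ has: - objects: pairs $(2^{[n]},g)$ with $g\colon 2^{[n]}\to A$ an effect-algebra morphism; - arrows $(2^{[n]},g)\to(2^{[n']},g')$: Boolean algebra morphisms $f\colon 2^{[n]}\to 2^{[n']}$ with $g'\circ f=g$. A category is amalgamated if every span $X_1\leftarrow X\rightarrow X_2$ in it can be completed to a commutative square. *)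

From mathcomp Require Import all_boot.
Set Implicit Arguments. Unset Strict Implicit. Unset Printing Implicit Defensive.

Record EffectAlgebra := {
  ea_car :> Type;
  ea_sum : ea_car -> ea_car -> option ea_car;
  ea_zero : ea_car;
  ea_one : ea_car;
  ea_comm : forall a b, ea_sum a b = ea_sum b a;
  ea_assoc : forall a b c ab abc,
      ea_sum a b = Some ab -> ea_sum ab c = Some abc ->
      exists bc, ea_sum b c = Some bc /\ ea_sum a bc = Some abc;
  ea_orthosupp : forall a, exists! a', ea_sum a a' = Some ea_one;
  ea_zero_one : forall a s, ea_sum a ea_one = Some s -> a = ea_zero
}.

Definition ea_le (A : EffectAlgebra) (a b : A) : Prop :=
  exists c, ea_sum a c = Some b.

Definition riesz_decomposition (A : EffectAlgebra) : Prop :=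
  forall (u v1 v2 v12 : A), ea_sum v1 v2 = Some v12 -> ea_le u v12 ->
    exists u1 u2, ea_le u1 v1 /\ ea_le u2 v2 /\ ea_sum u1 u2 = Some u.

(* 2^[n] is represented by {set 'I_n}. The effect-algebra structure:
   x + y defined iff x :&: y = set0, then equal to x :|: y. *)
Definition is_ea_morph_from_pow (A : EffectAlgebra) (n : nat)
    (g : {set 'I_n} -> A) : Prop :=
  g setT = ea_one A /\
  forall x y : {set 'I_n}, x :&: y = set0 -> ea_sum (g x) (g y) = Some (g (x :|: y)).

Definition is_ba_morph (n m : nat) (f : {set 'I_n} -> {set 'I_m}) : Prop :=
  f set0 = set0 /\ f setT = setT /\
  (forall x y, f (x :|: y) = f x :|: f y) /\
  (forall x y, f (x :&: y) = f x :&: f y) /\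
  (forall x, f (~: x) = ~: f x).

Record intR_obj (A : EffectAlgebra) := IntRObj {
  ob_n : nat;
  ob_g : {set 'I_ob_n} -> A;
  ob_g_morph : is_ea_morph_from_pow ob_g
}.

Record intR_hom (A : EffectAlgebra) (X Y : intR_obj A) := IntRHom {
  hom_f : {set 'I_(ob_n X)} -> {set 'I_(ob_n Y)};
  hom_ba : is_ba_morph hom_f;
  hom_comm : forall x, @ob_g A Y (hom_f x) = @ob_g A X x
}.

(* The category \int R(A) is amalgamated: every span completes to a
   commutative square (arrows are equal iff their underlying maps are). *)
Definition intR_amalgamated (A : EffectAlgebra) : Prop :=
  forall (X X1 X2 : intR_obj A) (f1 : intR_hom X X1) (f2 : intR_hom X X2),
    exists (Y : intR_obj A) (h1 : intR_hom X1 Y) (h2 : intR_hom X2 Y),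
      forall x, hom_f h1 (hom_f f1 x) = hom_f h2 (hom_f f2 x).

From Stdlib Require Import IndefiniteDescription.
From HB Require Import structures.
From mathcomp Require Import all_boot.
Set Implicit Arguments. Unset Strict Implicit. Unset Printing Implicit Defensive.

(* An object (2^[n], g) is determined by the weights g {i} of its atoms,
   which add up to 1, and a Boolean morphism 2^[n] -> 2^[m] is the preimage
   map of a function [m] -> [n]; so an arrow X -> Y splits each atom weight
   of X into the weights of the atoms of Y lying over it.

   Given the Riesz decomposition property, the two splittings of g {i} along
   a span X1 <- X -> X2 have a common refinement (d j k), as in the
   refinement form of Riesz decomposition; indexing new atoms by the pairs
   (j, k) lying over a common atom i, with weights d j k, gives the amalgam.

   Conversely, if u <= v1 + v2 = v and v + c = 1, amalgamate the two arrows
   (v, c) -> (v1, v2, c) and (v, c) -> (u, u', c) that merge the first two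
   atoms.  In the amalgam Y the image U of the atom of u lies in the union of
   the disjoint images V1, V2 of the atoms of v1 and v2, hence
   u = g(U & V1) + g(U & V2) is a Riesz decomposition. *)

Section EffectAlgebraTheory.
Variable A : EffectAlgebra.
Local Notation sum := (@ea_sum A).
Local Notation zero := (ea_zero A).
Local Notation one := (ea_one A).

Lemma ea_assoc_r (a b c bc abc : A) : sum b c = Some bc -> sum a bc = Some abc ->
  exists ab, sum a b = Some ab /\ sum ab c = Some abc.
Proof.
rewrite ea_comm [sum a _]ea_comm => Hcb Hbca.
have [ba [Hba Hbac]] := ea_assoc Hcb Hbca.
by exists ba; rewrite ea_comm [sum _ c]ea_comm.
Qed.

Lemma ea_orthosupp_uniq (a b c : A) :
  sum a b = Some one -> sum a c = Some one -> b = c.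
Proof.
move=> Hb Hc; have [a' [_ Ua']] := ea_orthosupp a.
by rewrite -(Ua' b Hb) (Ua' c Hc).
Qed.

Lemma ea_sum_one0 : sum one zero = Some one.
Proof.
have [o [Ho _]] := ea_orthosupp one.
by rewrite -(@ea_zero_one _ o one) // ea_comm.
Qed.

Lemma ea_sum0 (a : A) : sum a zero = Some a.
Proof.
have [a' [Ha _]] := ea_orthosupp a.
have Ha' : sum a' a = Some one by rewrite ea_comm.
have [a0 [Ha0 Ha'a0]] := ea_assoc Ha' ea_sum_one0.
by rewrite Ha0 (ea_orthosupp_uniq Ha'a0 Ha').
Qed.

Lemma ea_sum0l (a : A) : sum zero a = Some a.
Proof. by rewrite ea_comm ea_sum0. Qed.

Lemma ea_sumI (a b c s : A) : sum a b = Some s -> sum a c = Some s -> b = c.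
Proof.
move=> Hb Hc; have [s' [Hs _]] := ea_orthosupp s.
have [e [Hbs' Hae]] := ea_assoc Hb Hs.
have [e' [Hcs' Hae']] := ea_assoc Hc Hs.
have Ee' := ea_orthosupp_uniq Hae Hae'; subst e'.
have [e'' [He _]] := ea_orthosupp e.
have [f [Hf Hbf]] := ea_assoc Hbs' He.
have [f' [Hf' Hcf']] := ea_assoc Hcs' He.
move: Hf'; rewrite Hf => -[Eff']; subst f'.
by apply: (@ea_orthosupp_uniq f); rewrite ea_comm.
Qed.

Lemma ea_sum_eq0 (a b : A) : sum a b = Some zero -> a = zero.
Proof.
move=> Hab; have Hone : sum zero one = Some one by rewrite ea_comm ea_sum_one0.
have [b1 [Hb1 _]] := ea_assoc Hab Hone.
by move: Hab; rewrite (ea_zero_one Hb1) ea_sum0 => -[].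
Qed.

Lemma ea_le0 (a : A) : ea_le a zero -> a = zero.
Proof. by case=> c /ea_sum_eq0. Qed.

(* Totalising the partial sum on [option A] turns finite sums into big operators. *)
Definition oadd (x y : option A) : option A :=
  match x, y with Some a, Some b => sum a b | _, _ => None end.

Lemma oaddA : associative oadd.
Proof.
move=> [a|] [b|] [c|] //=; last by case: (sum a b).
case Hbc: (sum b c) => [bc|]; case Hab: (sum a b) => [ab|] //=.
- case Habc: (sum ab c) => [abc|].
    have [bc' [Hbc' Habc']] := ea_assoc Hab Habc.
    by move: Hbc'; rewrite Hbc => -[->].
  case Habc': (sum a bc) => [abc|] //.
  have [ab' [Hab' Habc'']] := ea_assoc_r Hbc Habc'.
  by move: Hab'; rewrite Hab => -[Eab]; rewrite -Eab Habc in Habc''.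
- case Habc: (sum a bc) => [abc|] //.
  by have [ab' [Hab' _]] := ea_assoc_r Hbc Habc; rewrite Hab in Hab'.
- case Habc: (sum ab c) => [abc|] //.
  by have [bc' [Hbc' _]] := ea_assoc Hab Habc; rewrite Hbc in Hbc'.
Qed.

Lemma oaddC : commutative oadd.
Proof. by move=> [a|] [b|] //=; rewrite ea_comm. Qed.

Lemma oadd0 : left_id (Some zero) oadd.
Proof. by move=> [a|] //=; rewrite ea_sum0l. Qed.

Lemma oadd_some (x y : option A) s : oadd x y = Some s ->
  exists a b, [/\ x = Some a, y = Some b & sum a b = Some s].
Proof. by case: x => [a|] //; case: y => [b|] // Hs; exists a, b. Qed.

End EffectAlgebraTheory.

HB.instance Definition _ (A : EffectAlgebra) :=
  Monoid.isComLaw.Build (option A) (Some (ea_zero A)) (@oadd A)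
    (@oaddA A) (@oaddC A) (@oadd0 A).

Notation "\osum_ ( i 'in' S ) F" :=
  (\big[@oadd _/Some (ea_zero _)]_(i in S) Some F)
  (at level 41, F at level 41, i, S at level 50).
Notation "\osum_ ( i | P ) F" :=
  (\big[@oadd _/Some (ea_zero _)]_(i | P) Some F)
  (at level 41, F at level 41, i, P at level 50).

Section Refinement.
Variables (A : EffectAlgebra) (rdp : riesz_decomposition A).
Local Notation sum := (@ea_sum A).
Local Notation zero := (ea_zero A).

Lemma riesz_le_bigsum (J : finType) (C : {set J}) (b : J -> A) (u t : A) :
  ea_le u t -> \osum_(j in C) (b j) = Some t ->
  exists u' : J -> A,
    \osum_(j in C) (u' j) = Some u /\ forall j, j \in C -> ea_le (u' j) (b j).
Proof.
have [k] := ubnP #|C|; elim: k C u t => // k IH C u t HC Hut.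
case: (set_0Vmem C) => [-> | [j0 Cj0]].
  rewrite big_set0 => -[Ht]; move: Hut; rewrite -Ht => /ea_le0 ->.
  by exists (fun=> zero); rewrite big_set0; split=> // j; rewrite in_set0.
rewrite (big_setD1 _ Cj0) => /oadd_some [_ [t' [[<-] Ht' Hs]]].
have [u1 [u2 [Hu1 [Hu2 Hu]]]] := rdp Hs Hut.
have [|u' [Hu' Hle]] := IH (C :\ j0) u2 t' _ Hu2 Ht'.
  by rewrite (cardsD1 j0) Cj0 in HC.
exists (fun j => if j == j0 then u1 else u' j); split.
  rewrite (big_setD1 _ Cj0) eqxx (eq_bigr (fun j => Some (u' j))) ?Hu' //.
  by move=> j; rewrite in_setD1 => /andP[/negPf ->].
move=> j Cj; case: eqP => [-> // | /eqP j'j0].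
by apply: Hle; rewrite in_setD1 j'j0.
Qed.

Lemma riesz_refinement (I J : finType) (C : {set I}) (D : {set J})
    (a : I -> A) (b : J -> A) (s : A) :
  \osum_(i in C) (a i) = Some s -> \osum_(j in D) (b j) = Some s ->
  exists m : I -> J -> A,
    (forall i, i \in C -> \osum_(j in D) (m i j) = Some (a i)) /\
    (forall j, j \in D -> \osum_(i in C) (m i j) = Some (b j)).
Proof.
have [k] := ubnP #|C|; elim: k C b s => // k IH C b s HC.
case: (set_0Vmem C) => [-> | [i0 Ci0]].
  rewrite big_set0 => -[<-] Hb.
  exists (fun _ _ => zero); split=> [i|j Dj]; first by rewrite in_set0.
  move: Hb; rewrite (big_setD1 _ Dj) => /oadd_some [_ [_ [[<-] _ /ea_sum_eq0 ->]]].
  by rewrite big_set0.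
rewrite (big_setD1 _ Ci0) => /oadd_some [_ [s' [[<-] Hs' Hs]]] Hb.
have [u [Hu Hub]] := riesz_le_bigsum (ex_intro _ s' Hs) Hb.
have [b' Hb'] : exists b' : J -> A, forall j, j \in D -> sum (u j) (b' j) = Some (b j).
  apply: (functional_choice (fun j c => j \in D -> sum (u j) c = Some (b j))) => j.
  by case: (boolP (j \in D)) => [/Hub [c Hc] | _]; [exists c | exists zero].
have Hb'u : \osum_(j in D) (b j) = oadd (\osum_(j in D) (u j)) (\osum_(j in D) (b' j)).
  by rewrite -big_split; apply: eq_bigr => j Dj /=; rewrite Hb'.
move: Hb; rewrite Hb'u Hu => /oadd_some [_ [s'' [[<-] Hs'' Hs2]]].
move: Hs''; rewrite -(ea_sumI Hs Hs2) => Hs''.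
have [|m [Hrow Hcol]] := IH (C :\ i0) b' s' _ Hs' Hs''.
  by rewrite (cardsD1 i0) Ci0 in HC.
exists (fun i => if i == i0 then u else m i); split.
  move=> i Ci; case: eqP => [-> | /eqP ii0]; first by rewrite Hu.
  by apply: Hrow; rewrite in_setD1 ii0.
move=> j Dj; rewrite (big_setD1 _ Ci0) eqxx (eq_bigr (fun i => Some (m i j))).
  by rewrite Hcol //= Hb'.
by move=> i; rewrite in_setD1 => /andP[/negPf ->].
Qed.

End Refinement.

Section PowersetMorphisms.
Variables (A : EffectAlgebra) (n : nat) (g : {set 'I_n} -> A).
Hypothesis Hg : is_ea_morph_from_pow g.
Local Notation sum := (@ea_sum A).

Lemma morph_set0 : g set0 = ea_zero A.
Proof.
have := proj2 Hg set0 set0 (setI0 _); rewrite setU0 => H0.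
exact: ea_sumI H0 (ea_sum0 _).
Qed.

Lemma morph_atomsE (S : {set 'I_n}) : Some (g S) = \osum_(i in S) (g [set i]).
Proof.
have [k] := ubnP #|S|; elim: k S => // k IH S.
case: (set_0Vmem S) => [-> _ | [i Si] HS]; first by rewrite big_set0 morph_set0.
rewrite (big_setD1 _ Si) -IH; last by rewrite (cardsD1 i) Si in HS.
rewrite /= (proj2 Hg) ?setD1K //.
by apply/setP => j; rewrite !inE; case: eqP => // ->; rewrite eqxx.
Qed.

Lemma morph_le (x y : {set 'I_n}) : x \subset y -> ea_le (g x) (g y).
Proof.
move=> xy; exists (g (y :\: x)).
by rewrite -{2}(setID y x) (setIidPr xy) (proj2 Hg) // setIDA setDIl setDv set0I.
Qed.

Lemma morph_sum_split (U V1 V2 : {set 'I_n}) :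
  U \subset V1 :|: V2 -> V1 :&: V2 = set0 ->
  exists u1 u2, [/\ ea_le u1 (g V1), ea_le u2 (g V2) & sum u1 u2 = Some (g U)].
Proof.
move=> UV12 V12; exists (g (U :&: V1)), (g (U :&: V2)).
split; [exact/morph_le/subsetIr | exact/morph_le/subsetIr |].
rewrite (proj2 Hg) -?setIUr ?(setIidPl UV12) //.
by rewrite setIACA setIid V12 setI0.
Qed.

End PowersetMorphisms.

Section WeightObjects.
Variable A : EffectAlgebra.
Local Notation zero := (ea_zero A).
Local Notation one := (ea_one A).

Definition wsum n (w : 'I_n -> A) (S : {set 'I_n}) := \osum_(i in S) (w i).

(* The default [zero] is never reached when [w] sums to [one]. *)
Definition wmeasure n (w : 'I_n -> A) (S : {set 'I_n}) := odflt zero (wsum w S).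

Section Weights.
Variables (n : nat) (w : 'I_n -> A).
Hypothesis Hw : wsum w setT = Some one.

Lemma wsumE (S : {set 'I_n}) : wsum w S = Some (wmeasure w S).
Proof.
move: Hw; rewrite /wmeasure /wsum (big_setID S) setTI.
by case/oadd_some=> [a [_ [-> _ _]]].
Qed.

Lemma wmeasure_morph : is_ea_morph_from_pow (wmeasure w).
Proof.
split=> [|x y xy]; first by rewrite /wmeasure Hw.
rewrite -[LHS]/(oadd (Some _) (Some _)) -!wsumE /wsum [in RHS](big_setID x) setUK.
congr oadd; apply: eq_bigl => i; have /setP/(_ i) := xy.
by rewrite !inE; case: (i \in x); case: (i \in y).
Qed.

Definition weight_obj : intR_obj A := IntRObj wmeasure_morph.

End Weights.

Lemma wmeasure1 n (w : 'I_n -> A) i : wmeasure w [set i] = w i.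
Proof. by rewrite /wmeasure /wsum big_set1. Qed.

Lemma wsum_setT n (w : 'I_n -> A) : wsum w setT = \osum_(i | true) (w i).
Proof. by apply: eq_bigl => i; rewrite inE. Qed.

Lemma preimset_ba m n (p : 'I_m -> 'I_n) : is_ba_morph (fun x => p @^-1: x).
Proof.
by split; [|split; [|split; [|split]]] => *;
  rewrite ?preimset0 ?preimsetT ?preimsetU ?preimsetI ?preimsetC.
Qed.

(* [p] induces the Boolean morphism [p @^-1: _], which is an arrow from [X] to
   the object with atom weights [w] exactly when this holds. *)
Definition fibre_sums (X : intR_obj A) m (w : 'I_m -> A) (p : 'I_m -> 'I_(ob_n X)) :=
  forall i, \osum_(j | p j == i) (w j) = Some (@ob_g A X [set i]).
Arguments fibre_sums X [m] w p.

Section FibreSums.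
Variables (X : intR_obj A) (m : nat) (w : 'I_m -> A) (p : 'I_m -> 'I_(ob_n X)).
Hypothesis Hp : fibre_sums X w p.

Lemma wsum_preimset (x : {set 'I_(ob_n X)}) : wsum w (p @^-1: x) = Some (@ob_g A X x).
Proof.
rewrite /wsum (eq_bigl (fun j => p j \in x)) => [|j]; last by rewrite inE.
rewrite (partition_big p (mem x)) // morph_atomsE; last exact: ob_g_morph.
apply: eq_bigr => i xi; rewrite -Hp; apply: eq_bigl => j.
by case: eqP => [-> | _]; rewrite ?andbF ?andbT.
Qed.

Lemma fibre_sums_total : wsum w setT = Some one.
Proof. by rewrite -(preimsetT p) wsum_preimset (proj1 (ob_g_morph X)). Qed.

Definition fibre_hom (Hw : wsum w setT = Some one) : intR_hom X (weight_obj Hw) :=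
  @IntRHom A X (weight_obj Hw) _ (preimset_ba p)
    (fun x => congr1 (odflt zero) (wsum_preimset x)).

End FibreSums.
End WeightObjects.
Arguments fibre_sums [A] X [m] w p.

Section BooleanMorphisms.
Variables (n m : nat) (f : {set 'I_n} -> {set 'I_m}).
Hypothesis Hf : is_ba_morph f.

Lemma ba_mono (x y : {set 'I_n}) : x \subset y -> f x \subset f y.
Proof.
have [_ [_ [fU _]]] := Hf.
by move=> /setUidPr xy; apply/setUidPr; rewrite -fU xy.
Qed.

Lemma ba_memE (x : {set 'I_n}) j : (j \in f x) = [exists i in x, j \in f [set i]].
Proof.
have [f0 [_ [fU _]]] := Hf.
have Ex : x = \bigcup_(i in x) [set i].
  apply/setP => i; apply/idP/bigcupP => [xi | [i' xi' /set1P ->]] //.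
  by exists i; rewrite ?set11.
rewrite {1}Ex (big_morph f fU f0).
apply/bigcupP/existsP => [[i xi fij] | [i /andP[xi fij]]]; last by exists i.
by exists i; rewrite xi.
Qed.

Lemma ba_atom_memE i i' j : j \in f [set i] -> (j \in f [set i']) = (i' == i).
Proof.
have [f0 [_ [_ [fI _]]]] := Hf.
move=> fij; case: eqP => [-> // | /eqP i'i]; apply/negP => fi'j.
have : j \in f ([set i] :&: [set i']) by rewrite fI inE fij.
suff -> : [set i] :&: [set i'] = set0 by rewrite f0 inE.
by apply/setP => t; rewrite !inE; case: eqP => // ->; rewrite eq_sym (negPf i'i).
Qed.

Lemma ba_atom_cover j : exists i, j \in f [set i].
Proof.
have [_ [fT _]] := Hf.
have : j \in f setT by rewrite fT inE.
by rewrite ba_memE => /existsP [i /andP[_ fij]]; exists i.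
Qed.

End BooleanMorphisms.

Definition span_compatible n n1 n2 (f1 : {set 'I_n} -> {set 'I_n1})
    (f2 : {set 'I_n} -> {set 'I_n2}) (j : 'I_n1) (k : 'I_n2) : bool :=
  [forall i, (j \in f1 [set i]) == (k \in f2 [set i])].

Lemma span_compatibleC n n1 n2 (f1 : {set 'I_n} -> {set 'I_n1})
    (f2 : {set 'I_n} -> {set 'I_n2}) j k :
  span_compatible f1 f2 j k = span_compatible f2 f1 k j.
Proof. by apply: eq_forallb => i; rewrite eq_sym. Qed.

Section SpanCompatible.
Variables (n n1 n2 : nat).
Variables (f1 : {set 'I_n} -> {set 'I_n1}) (f2 : {set 'I_n} -> {set 'I_n2}).
Hypotheses (Hf1 : is_ba_morph f1) (Hf2 : is_ba_morph f2).

Lemma span_compatible_atom i j k :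
  j \in f1 [set i] -> span_compatible f1 f2 j k = (k \in f2 [set i]).
Proof.
move=> f1ij; have [i2 f2i2k] := ba_atom_cover Hf2 k.
rewrite (ba_atom_memE Hf2 i f2i2k); apply/forallP/eqP => [/(_ i) | ii2 i'].
  by rewrite f1ij (ba_atom_memE Hf2 i f2i2k) => /eqP/esym/eqP.
by rewrite (ba_atom_memE Hf1 i' f1ij) (ba_atom_memE Hf2 i' f2i2k) ii2.
Qed.

Lemma span_compatible_mem j k (x : {set 'I_n}) :
  span_compatible f1 f2 j k -> (j \in f1 x) = (k \in f2 x).
Proof.
move=> /forallP jk; rewrite (ba_memE Hf1) (ba_memE Hf2).
by apply: eq_existsb => i; rewrite (eqP (jk i)).
Qed.

End SpanCompatible.

Section PairEnumeration.
Variables (R : Type) (idx : R) (op : Monoid.com_law idx) (I J : finType).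
Variables (S : {set I * J}) (F : I * J -> R).

Lemma big_enum_fst i :
  \big[op/idx]_(t < #|S| | (enum_val t).1 == i) F (enum_val t)
    = \big[op/idx]_(j | (i, j) \in S) F (i, j).
Proof.
rewrite -(big_enum_val_cond (fun p => p.1 == i)).
rewrite (reindex_onto (fun j => (i, j)) snd) => [|[i' j] /andP[_ /eqP /= ->]] //.
by apply: eq_bigl => j; rewrite /= !eqxx !andbT.
Qed.

Lemma big_enum_snd j :
  \big[op/idx]_(t < #|S| | (enum_val t).2 == j) F (enum_val t)
    = \big[op/idx]_(i | (i, j) \in S) F (i, j).
Proof.
rewrite -(big_enum_val_cond (fun p => p.2 == j)).
rewrite (reindex_onto (fun i => (i, j)) fst) => [|[i j'] /andP[_ /eqP /= ->]] //.
by apply: eq_bigl => i; rewrite /= !eqxx !andbT.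
Qed.

End PairEnumeration.

Section Amalgamation.
Variable A : EffectAlgebra.
Local Notation sum := (@ea_sum A).
Local Notation zero := (ea_zero A).
Local Notation one := (ea_one A).

Lemma riesz_span_matrix (rdp : riesz_decomposition A) (X X1 X2 : intR_obj A)
    (f1 : intR_hom X X1) (f2 : intR_hom X X2) :
  exists d : 'I_(ob_n X1) -> 'I_(ob_n X2) -> A,
    (forall j, \osum_(k | span_compatible (hom_f f1) (hom_f f2) j k) (d j k)
                 = Some (@ob_g A X1 [set j])) /\
    (forall k, \osum_(j | span_compatible (hom_f f1) (hom_f f2) j k) (d j k)
                 = Some (@ob_g A X2 [set k])).
Proof.
have [Hf1 Hf2] := (hom_ba f1, hom_ba f2).
have Hblock i : exists m : 'I_(ob_n X1) -> 'I_(ob_n X2) -> A,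
    (forall j, j \in hom_f f1 [set i] ->
       \osum_(k in hom_f f2 [set i]) (m j k) = Some (@ob_g A X1 [set j])) /\
    (forall k, k \in hom_f f2 [set i] ->
       \osum_(j in hom_f f1 [set i]) (m j k) = Some (@ob_g A X2 [set k])).
  apply: (riesz_refinement rdp (s := @ob_g A X [set i])).
  - by rewrite -morph_atomsE ?hom_comm //; exact: ob_g_morph.
  - by rewrite -morph_atomsE ?hom_comm //; exact: ob_g_morph.
have [m Hm] := functional_choice _ Hblock.
pose d j k := if [pick i | j \in hom_f f1 [set i]] is Some i then m i j k else zero.
have Hd i j k : j \in hom_f f1 [set i] -> d j k = m i j k.
  rewrite /d => f1ij; case: pickP => [i' | /(_ i)]; last by rewrite f1ij.
  by rewrite (ba_atom_memE Hf1 i' f1ij) => /eqP ->.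
exists d; split=> [j | k].
  have [i f1ij] := ba_atom_cover Hf1 j.
  rewrite (eq_bigl _ _ (fun k => span_compatible_atom Hf1 Hf2 k f1ij)).
  rewrite (eq_bigr (fun k => Some (m i j k))) => [|k _]; last by rewrite (Hd i).
  exact: (proj1 (Hm i)).
have [i f2ik] := ba_atom_cover Hf2 k.
rewrite (eq_bigl (fun j => j \in hom_f f1 [set i])) => [|j]; last first.
  by rewrite span_compatibleC (span_compatible_atom Hf2 Hf1 _ f2ik).
rewrite (eq_bigr (fun j => Some (m i j k))) => [|j f1ij]; last by rewrite (Hd i).
exact: (proj2 (Hm i)).
Qed.

Theorem riesz_amalgamated : riesz_decomposition A -> intR_amalgamated A.
Proof.
move=> rdp X X1 X2 f1 f2.
have [d [Hrow Hcol]] := riesz_span_matrix rdp f1 f2.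
pose S := [set p | span_compatible (hom_f f1) (hom_f f2) p.1 p.2].
pose w (t : 'I_#|S|) := d (enum_val t).1 (enum_val t).2.
have H1 : fibre_sums X1 w (fun t => (enum_val t).1).
  move=> j; rewrite (big_enum_fst _ S (fun p => Some (d p.1 p.2))) -Hrow.
  by apply: eq_bigl => k; rewrite inE.
have H2 : fibre_sums X2 w (fun t => (enum_val t).2).
  move=> k; rewrite (big_enum_snd _ S (fun p => Some (d p.1 p.2))) -Hcol.
  by apply: eq_bigl => j; rewrite inE.
have Hw := fibre_sums_total H1.
exists (weight_obj Hw), (fibre_hom H1 Hw), (fibre_hom H2 Hw) => x /=.
apply/setP => t; rewrite !inE.
by have := enum_valP t; rewrite inE; apply: span_compatible_mem; apply: hom_ba.
Qed.

Theorem amalgamated_riesz : intR_amalgamated A -> riesz_decomposition A.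
Proof.
move=> Am u v1 v2 v Hv [u' Hu].
have [c [Hc _]] := ea_orthosupp v.
have H0 : wsum (fun i : 'I_2 => nth zero [:: v; c] i) setT = Some one.
  by rewrite wsum_setT !big_ord_recl big_ord0 /= ea_sum0.
pose X := weight_obj H0.
pose merge (j : 'I_3) : 'I_2 := if val j == 2 then ord_max else ord0.
have merge_fibres a b : sum a b = Some v ->
    fibre_sums X (fun j : 'I_3 => nth zero [:: a; b; c] j) merge.
  move=> Hab i; rewrite /= wmeasure1 big_mkcond !big_ord_recl big_ord0 /merge /=.
  by case: i => [[|[|?]] ?] //=; rewrite ?ea_sum0 ?ea_sum0l // ea_sum0 /= ?Hab.
have [Fv Fu] := (merge_fibres _ _ Hv, merge_fibres _ _ Hu).
have [Y [h1 [h2 Hsq]]] :=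
  Am _ _ _ (fibre_hom Fv (fibre_sums_total Fv)) (fibre_hom Fu (fibre_sums_total Fu)).
have [h1_0 [_ [h1U [h1I _]]]] := hom_ba h1.
pose j0 : 'I_3 := ord0; pose j1 : 'I_3 := @Ordinal 3 1 isT.
have [V1E V2E UE] : [/\ @ob_g A Y (hom_f h1 [set j0]) = v1,
    @ob_g A Y (hom_f h1 [set j1]) = v2 & @ob_g A Y (hom_f h2 [set j0]) = u].
  by rewrite !hom_comm /= !wmeasure1.
have disj : hom_f h1 [set j0] :&: hom_f h1 [set j1] = set0.
  by rewrite -h1I -h1_0; congr hom_f; apply/setP => -[[|[|[|?]]] ?]; rewrite !inE.
have cover : hom_f h2 [set j0] \subset hom_f h1 [set j0] :|: hom_f h1 [set j1].
  rewrite -h1U; have -> : [set j0] :|: [set j1] = merge @^-1: [set ord0].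
    by apply/setP => -[[|[|[|?]]] ?]; rewrite !inE.
  move: (Hsq [set ord0]) => /= ->.
  by apply: (ba_mono (hom_ba h2)); apply/subsetP => t; rewrite !inE => /eqP ->.
have [u1 [u2 [le1 le2 Hs]]] := morph_sum_split (ob_g_morph Y) cover disj.
by exists u1, u2; move: le1 le2 Hs; rewrite V1E V2E UE.
Qed.

End Amalgamation.

Theorem mainTheorem2 (A : EffectAlgebra) :
  riesz_decomposition A <-> intR_amalgamated A.
Proof. split; [exact: riesz_amalgamated | exact: amalgamated_riesz]. Qed.
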